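(* For each $n\ge1$ and even $h\ge0$, the number $|\mathrm{UMap}(n,\mathbf N_h)|$ of $n$-vertex unicellular maps in $\mathbf N_h$ satisfies $|\mathrm{UMap}(n,\mathbf N_h)|\le c^{n+h}h^h$, where $c=2^7e^{3/2}$.
   Context: A map is a connected pseudograph (loops and multiple edges allowed, not necessarily simple) cellularly embedded in a surface, considered unlabelled and unrooted (up to isomorphism); it is unicellular if it has exactly one face. $\mathbf N_h$ is the non-orientable surface of Euler genus $h$, with $\mathbf N_0$ meaning the sphere. Convention $0^0=1$. *)

From mathcomp Require Import all_boot all_fingroup.
Set Implicit Arguments. Unset Strict Implicit. Unset Printing Implicit Defensive.

Local Open Scope group_scope.

(* A map with m >= 1 edges is encoded by its 4m flags, identified with
   'I_(4*m), and three fixed-point-free involutions r0 r1 r2 (the standard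
   combinatorial encoding of maps on arbitrary, possibly non-orientable,
   closed surfaces; loops and multiple edges allowed):
   r0 r2 commute and r0*r2 is fixed-point-free, and <r0,r1,r2> is transitive.
   vertices = orbits of <r1,r2>, edges = orbits of <r0,r2>,
   faces = orbits of <r0,r1>. *)
Definition flags (m : nat) := {perm 'I_(4 * m)}.
Definition triple (m : nat) := (flags m * flags m * flags m)%type.

Section MapDefs.
Variable m : nat.
Implicit Type t : triple m.

Definition r0 t := t.1.1.
Definition r1 t := t.1.2.
Definition r2 t := t.2.

Definition fpf_invol (r : flags m) : bool :=
  (r * r == 1) && [forall x, r x != x].

Definition n_orbits (G : {set flags m}) : nat :=
  #|[set orbit 'P G x | x : 'I_(4 * m)]|.

Definition is_map t : bool :=
  [&& fpf_invol (r0 t), fpf_invol (r1 t), fpf_invol (r2 t),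
      r0 t * r2 t == r2 t * r0 t,
      [forall x, (r0 t * r2 t) x != x] &
      [forall x, forall y, y \in orbit 'P <<[set r0 t; r1 t; r2 t]>> x]].

Definition nvert t := n_orbits <<[set r1 t; r2 t]>>.
Definition nface t := n_orbits <<[set r0 t; r1 t]>>.
(* the number of edges is m (orbits of <r0,r2> have size 4) *)

(* orientable iff the flag graph is bipartite *)
Definition orientable t : bool :=
  [exists col : {ffun 'I_(4 * m) -> bool},
    [forall x, [&& col (r0 t x) == ~~ col x,
                   col (r1 t x) == ~~ col x &
                   col (r2 t x) == ~~ col x]]].

(* t is a unicellular map with n vertices in N_h (Euler genus h,
   orientable (sphere) iff h = 0, non-orientable iff h > 0).
   Euler's formula: v - e + f = 2 - h. *)
Definition is_umap (n h : nat) t : bool :=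
  [&& is_map t, (nvert t == n)%N, (nface t == 1)%N,
      (nvert t + nface t + h == 2 + m)%N & orientable t == (h == 0%N)].

Definition relabel (p : flags m) t : triple m :=
  (p^-1 * r0 t * p, p^-1 * r1 t * p, p^-1 * r2 t * p).

Definition iso_class t : {set triple m} := [set relabel p t | p : flags m].

Definition umap_count_edges (n h : nat) : nat :=
  #|[set iso_class t | t in [set t | is_umap n h t]]|.
End MapDefs.

(* |UMap(n, N_h)|: the edgeless map (a single vertex on the sphere, one face)
   plus the maps with m >= 1 edges; by Euler's formula a unicellular map
   has m = n + h - 1 edges, so summing over 1 <= m <= n + h is exhaustive. *)
Definition UMap_card (n h : nat) : nat :=
  ((n == 1) && (h == 0))%N + \sum_(1 <= m < (n + h).+1) umap_count_edges m n h.

(* Numbering the flags along the boundary of the unique face puts a unicellular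
   map with m = n + h - 1 edges in the form (std_r0, std_r1, r), where r glues
   the 2m sides of a 4m-gon in pairs.  Such a gluing is rebuilt one side at a
   time.  An opening side needs no data.  When side j closes, flag 2j - 1 is an
   end of a path in the graph of r and std_r1 restricted to the sides glued so
   far, so this path holds at most one flag that is not glued yet.  If r sends
   flag 2j into the path, it sends it to that flag, so the partner is
   predicted.  Otherwise side j merges two components, which happens at most
   h times: at most m + 1 components are ever created and n of them survive as
   vertices.  Hence there are at most 3^(2m) (4m+1)^h gluings, and
   (n+h)^h <= e^(n+h) h^h gives the bound. *)

From mathcomp Require Import all_boot.
From Stdlib Require Import Reals.
(* ssrnat is imported again so that [^] on nat means [expn] rather than [Nat.pow]. *)
From mathcomp Require Import all_fingroup zify ssrnat.
From Stdlib Require Import Lra.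
Set Implicit Arguments. Unset Strict Implicit. Unset Printing Implicit Defensive.

Lemma iter_reverse (T : Type) (f c : T -> T) :
  (forall x, f (c (f x)) = c x) -> forall j x, iter j f (c (iter j f x)) = c x.
Proof.
move=> fcf; elim=> [|j IHj] x //.
by rewrite iterSr iterS fcf IHj.
Qed.

Lemma iter_inj (T : Type) (f : T -> T) : injective f -> forall n, injective (iter n f).
Proof. by move=> f_inj; elim=> [|n IHn] x y //= /f_inj /IHn. Qed.
Arguments iter_inj {T f} f_inj n.

Section IterOrder.
Variables (T : finType) (f : T -> T).
Hypothesis f_inj : injective f.

Lemma iter_order_muln q x : iter (q * fingraph.order f x) f x = x.
Proof. by elim: q => [|q IHq] //; rewrite mulSn iterD IHq iter_order. Qed.

Lemma iter_mod_order n x : iter n f x = iter (n %% fingraph.order f x) f x.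
Proof. by rewrite {1}(divn_eq n (fingraph.order f x)) addnC iterD iter_order_muln. Qed.

Lemma order_dvdn_iter n x : iter n f x = x -> fingraph.order f x %| n.
Proof.
move=> fnx; have lt_mod := ltn_pmod n (fingraph.order_gt0 f x).
by apply/eqP; rewrite -(findex_iter lt_mod) -iter_mod_order fnx findex0.
Qed.
End IterOrder.

Lemma dvdn_doubleS_eq o i j :
  o %| i.*2.+1 -> o %| j.*2.+1 -> i < o -> j < o -> i = j.
Proof.
wlog le_ji : i j / j <= i => [wlog_le | oi oj io jo].
  by case: (leqP j i) => [|/ltnW] le; [apply: wlog_le | symmetry; apply: wlog_le].
have coprime_o2 : coprime o 2 by rewrite coprimen2 (dvdn_odd oi) //= odd_double.
have : o %| (i - j) * 2.
  by rewrite mulnBl !muln2 -subSS; apply: dvdn_sub.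
by rewrite Gauss_dvdl // -eqn_mod_dvd // !modn_small // => /eqP.
Qed.

Lemma leq_expn2r m1 m2 e : m1 <= m2 -> m1 ^ e <= m2 ^ e.
Proof. by case: e => [|e] // le_m; rewrite leq_exp2r. Qed.

Lemma sum_nat_card k (P : pred nat) : \sum_(0 <= j < k) P j = #|[set j : 'I_k | P j]|.
Proof.
rewrite big_mkord -sum1_card [RHS]big_mkcond.
by apply: eq_bigr => j _; rewrite inE; case: (P j).
Qed.

Lemma sum_nat_pick a b j B : \sum_(a <= i < b) (if i == j then B else 0) <= B.
Proof.
rewrite -big_mkcond big_const_seq count_uniq_mem ?iota_uniq //.
by case: (j \in _); rewrite /= ?addn0.
Qed.

Section TwoInvolutions.
Variables (T : finType) (a b : T -> T).
Hypotheses (aK : involutive a) (bK : involutive b).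

Definition invol_graph : rel T := fun x y => (y == a x) || (y == b x).

Lemma invol_graph_sym : symmetric invol_graph.
Proof.
move=> x y; rewrite /invol_graph.
by apply/orP/orP => [] [] /eqP ->; rewrite ?aK ?bK eqxx; [left | right | left | right].
Qed.

Local Notation rho := (fun x => a (b x)).

Let rho_inj : injective rho.
Proof. by move=> x y /(inv_inj aK) /(inv_inj bK). Qed.

Let rho_reverse j x : iter j rho (a (iter j rho x)) = a x.
Proof. by apply: iter_reverse => z; rewrite aK bK. Qed.

Let rho_reverse_b j x : iter j rho (b (iter j rho x)) = b x.
Proof. by apply: iter_reverse => z; rewrite bK aK. Qed.

Lemma iter_rho_neq (a_fpf : forall x, a x != x) (b_fpf : forall x, b x != x) i j x :
  iter i rho x != b (iter j rho x).
Proof.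
apply/eqP => eq_ij; set s := i + j.
have : iter s rho x = b x by rewrite /s addnC iterD eq_ij rho_reverse_b.
rewrite -(rho_reverse_b s./2) -{1}(odd_double_half s) -addnn.
case: (odd s); rewrite ?add0n ?add1n -?addnS iterD ?iterS => /(iter_inj rho_inj).
  by apply/eqP; apply: a_fpf.
by apply/eqP; rewrite eq_sym.
Qed.

Lemma connect_invol_graph_fixed w z :
  a w = w -> connect invol_graph w z -> fconnect rho w z.
Proof.
move=> aw /connectP [p]; elim/last_ind: p z => [|p y IHp] z /=; first by move=> _ ->.
rewrite rcons_path last_rcons => /andP [wp edge] ->{z}.
have {IHp}wy := IHp _ wp erefl.
have closed_a u : fconnect rho w u -> fconnect rho w (a u).
  move=> /iter_findex wu; rewrite fconnect_sym //.
  have := fconnect_iter rho (findex rho w u) (a u).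
  by rewrite -{3}wu rho_reverse aw.
have closed_b u : fconnect rho w u -> fconnect rho w (b u).
  by move=> wu; rewrite -[b u]aK; apply/closed_a/(connect_trans wu)/fconnect1.
by case/orP: edge => /eqP ->; [apply: closed_a | apply: closed_b].
Qed.

Lemma order_dvd_fixed w z : a w = w -> b z = z -> fconnect rho w z ->
  fingraph.order rho w %| (findex rho w z).*2.+1.
Proof.
move=> aw bz wz; apply: order_dvdn_iter => //.
rewrite -addnn -addnS iterD iterS iter_findex // bz.
by have := rho_reverse (findex rho w z) w; rewrite iter_findex // aw.
Qed.

(* The component of [w] is its [rho]-orbit, and a [b]-fixed point [iter i rho w]
   in it forces the order of [w] to divide [2i+1]. *)
Lemma invol_graph_fixed_uniq w y y' : a w = w ->
  connect invol_graph w y -> b y = y -> connect invol_graph w y' -> b y' = y' -> y = y'.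
Proof.
move=> aw /(connect_invol_graph_fixed aw) wy by_.
move=> /(connect_invol_graph_fixed aw) wy' by'.
rewrite -(iter_findex wy) -(iter_findex wy'); congr iter.
exact: dvdn_doubleS_eq (order_dvd_fixed aw by_ wy) (order_dvd_fixed aw by' wy')
  (findex_max wy) (findex_max wy').
Qed.
End TwoInvolutions.

Section Restriction.
Variable n : nat.
Implicit Types (f g : 'I_n -> 'I_n) (b : nat) (x y : 'I_n).

Definition restr f b x : 'I_n := if (x < b) && (f x < b) then f x else x.

Lemma restrE f b x : x < b -> f x < b -> restr f b x = f x.
Proof. by rewrite /restr => -> ->. Qed.

Lemma restr_out f b x : ~~ (f x < b) -> restr f b x = x.
Proof. by rewrite /restr andbC => /negbTE ->. Qed.

Lemma restr_full f x : restr f n x = f x.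
Proof. by rewrite restrE. Qed.

Lemma restr_involutive f b : involutive f -> involutive (restr f b).
Proof.
move=> fK x; rewrite {2}/restr.
by case: ifPn => [/andP [xb fxb]|/negbTE out]; rewrite /restr ?fK ?xb ?fxb ?out.
Qed.

Lemma restr_mono f b b' x : b <= b' -> restr f b x != x -> restr f b' x = restr f b x.
Proof.
rewrite /restr => le_bb'; case: ifPn => [/andP [xb fxb] _|]; last by rewrite eqxx.
by rewrite !(leq_trans _ le_bb').
Qed.

Definition restr_graph f g b := invol_graph (restr f b) (restr g b).

Lemma restr_graph_sym f g b : involutive f -> involutive g -> symmetric (restr_graph f g b).
Proof. by move=> fK gK; apply: invol_graph_sym; apply: restr_involutive. Qed.

Lemma restr_graph_l f g b x : x < b -> f x < b -> restr_graph f g b x (f x).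
Proof. by move=> xb fxb; rewrite /restr_graph /invol_graph restrE ?eqxx. Qed.

Lemma restr_graph_r f g b x : x < b -> g x < b -> restr_graph f g b x (g x).
Proof. by move=> xb gxb; rewrite /restr_graph /invol_graph (restrE xb gxb) eqxx orbT. Qed.

Lemma connect_restr_graph_mono f g b b' x y : b <= b' ->
  connect (restr_graph f g b) x y -> connect (restr_graph f g b') x y.
Proof.
move=> le_bb'; apply: connect_sub => u v /orP [] /eqP ->.
  case: (eqVneq (restr f b u) u) => [->|moved]; first exact: connect0.
  by rewrite -(restr_mono le_bb' moved) connect1 // /restr_graph /invol_graph eqxx.
case: (eqVneq (restr g b u) u) => [->|moved]; first exact: connect0.
by rewrite -(restr_mono le_bb' moved) connect1 // /restr_graph /invol_graph eqxx orbT.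
Qed.

Lemma connect_restr_graph_orbit (f g : {perm 'I_n}) x y :
  connect (restr_graph f g n) x y -> y \in orbit 'P <<[set f; g]>> x.
Proof.
move=> /connectP [p]; elim: p x => [|z p IHp] x /=; first by move=> _ ->; apply: orbit_refl.
rewrite /restr_graph /invol_graph !restr_full => /andP [xz zp] yp.
apply: orbit_trans (IHp _ zp yp) _; case/orP: xz => /eqP ->;
  by apply: mem_orbit; apply: mem_gen; rewrite !inE eqxx ?orbT.
Qed.
End Restriction.

Section StandardFace.
Variable m' : nat.
Local Notation m := m'.+1.
Local Notation N := (4 * m).

(* Out of range, [flag_at i] defaults to flag 0. *)
Definition flag_at (i : nat) : 'I_N := insubd (Ordinal (isT : 0 < N)) i.

Lemma flag_atE i : i < N -> flag_at i = i :> nat.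
Proof. by move=> lt_iN; rewrite val_insubd lt_iN. Qed.

(* Flags are numbered along the boundary of the single face: side [j] carries
   the flags [2j] and [2j+1], swapped by r0, and r1 swaps [2j+1] with [2j+2]
   cyclically. *)
Definition r0_nat (x : nat) := if odd x then x.-1 else x.+1.
Definition r1_nat (x : nat) :=
  if odd x then (if x.+1 == N then 0 else x.+1) else (if x == 0 then N.-1 else x.-1).

Lemma r0_nat_lt x : x < N -> r0_nat x < N.
Proof. by rewrite /r0_nat; case: ifP; lia. Qed.

Lemma r1_nat_lt x : x < N -> r1_nat x < N.
Proof. by rewrite /r1_nat; case: ifP; case: ifP; lia. Qed.

Lemma r0_natK x : x < N -> r0_nat (r0_nat x) = x.
Proof. by rewrite /r0_nat; case: ifP; case: ifP; lia. Qed.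

Lemma r1_natK x : x < N -> r1_nat (r1_nat x) = x.
Proof.
rewrite /r1_nat; case: (boolP (odd x)) => x_odd;
  [case: (x.+1 =P N) | case: (x =P 0)] => x_end /=; repeat case: ifP => ? //=; lia.
Qed.

Definition r0_fun (x : 'I_N) := flag_at (r0_nat x).
Definition r1_fun (x : 'I_N) := flag_at (r1_nat x).

Lemma r0_funK : involutive r0_fun.
Proof.
move=> x; apply: val_inj.
by rewrite /= /r0_fun (flag_atE (r0_nat_lt (ltn_ord x))) r0_natK // flag_atE.
Qed.

Lemma r1_funK : involutive r1_fun.
Proof.
move=> x; apply: val_inj.
by rewrite /= /r1_fun (flag_atE (r1_nat_lt (ltn_ord x))) r1_natK // flag_atE.
Qed.

Definition std_r0 : flags m := perm (inv_inj r0_funK).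
Definition std_r1 : flags m := perm (inv_inj r1_funK).

Lemma std_r0E x : std_r0 x = r0_nat x :> nat.
Proof. by rewrite permE flag_atE ?r0_nat_lt. Qed.

Lemma std_r1E x : std_r1 x = r1_nat x :> nat.
Proof. by rewrite permE flag_atE ?r1_nat_lt. Qed.

Lemma std_r0K : involutive std_r0.
Proof. by move=> x; rewrite !permE r0_funK. Qed.

Lemma std_r1K : involutive std_r1.
Proof. by move=> x; rewrite !permE r1_funK. Qed.

Lemma std_r0_fpf x : std_r0 x != x.
Proof. by rewrite -(inj_eq val_inj) /= std_r0E /r0_nat; case: ifP; lia. Qed.

Lemma half_std_r0 x : (std_r0 x)./2 = x./2.
Proof. by rewrite std_r0E /r0_nat; case: ifP; lia. Qed.

Lemma std_r0_lt_double k x : (std_r0 x < k.*2) = (x < k.*2).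
Proof. by rewrite std_r0E /r0_nat; case: ifP; lia. Qed.

Lemma flag_at_double j : j < m.*2 -> flag_at j.*2 = j.*2 :> nat.
Proof. by move=> lt_j; rewrite flag_atE; lia. Qed.

Lemma std_r0_double j : j < m.*2 -> std_r0 (flag_at j.*2) = flag_at j.*2.+1.
Proof.
by move=> lt_j; apply: val_inj; rewrite /= std_r0E !flag_atE /r0_nat ?odd_double; lia.
Qed.

Lemma std_r1_double j : 0 < j -> j < m.*2 -> std_r1 (flag_at j.*2) = j.*2.-1 :> nat.
Proof.
move=> j_gt0 lt_j; rewrite std_r1E flag_at_double // /r1_nat odd_double /=.
by case: eqP; lia.
Qed.

Lemma std_r1_double_lt j : 0 < j -> j < m.*2 -> std_r1 (flag_at j.*2) < j.*2.
Proof. by move=> j_gt0 lt_j; rewrite std_r1_double //; lia. Qed.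

Lemma flag_sides (x : 'I_N) : x = flag_at (x./2).*2 \/ x = std_r0 (flag_at (x./2).*2).
Proof.
have := ltn_ord x; case: (boolP (odd x)) => x_odd lt_x; [right | left]; apply: val_inj;
  rewrite /= ?std_r0E !flag_atE /r0_nat ?odd_double; lia.
Qed.

Lemma flag_ltS k (x : 'I_N) : k < m.*2 -> x < k.+1.*2 ->
  [\/ x < k.*2, x = flag_at k.*2 | x = std_r0 (flag_at k.*2)].
Proof.
move=> lt_k lt_x; case: (ltnP x k.*2) => [|ge_x]; first by constructor 1.
rewrite std_r0_double //; case: (boolP (odd x)) => x_odd; [constructor 3 | constructor 2];
  apply: val_inj; rewrite /= flag_atE; lia.
Qed.
End StandardFace.

Section Gluing.
Variable m' : nat.
Local Notation m := m'.+1.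
Local Notation N := (4 * m).
Local Notation flag_at := (@flag_at m').
Local Notation std_r0 := (@std_r0 m').
Local Notation std_r1 := (@std_r1 m').

Definition side_gluing (r : flags m) : bool :=
  [&& [forall x, r (r x) == x], [forall x, r x != x],
      [forall x, r (std_r0 x) == std_r0 (r x)] & [forall x, r (std_r0 x) != x]].

Definition std_triple (r : flags m) : triple m := (std_r0, std_r1, r).

Lemma std_triple_gluing r : is_map (std_triple r) -> side_gluing r.
Proof.
case/and5P => _ _ /andP [/eqP rr /forallP r_fpf] /eqP comm /andP [/forallP r0r_fpf _].
apply/and4P; split; apply/forallP => x.
- by rewrite -permM rr perm1.
- exact: r_fpf.
- by rewrite -!permM comm.
- by rewrite -permM r0r_fpf.
Qed.

Variable r : flags m.
Hypothesis r_gluing : side_gluing r.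

Lemma gluingK : involutive r.
Proof. by case/and4P: r_gluing => /forallP rK _ _ _ x; apply/eqP. Qed.

Lemma gluing_fpf x : r x != x.
Proof. by case/and4P: r_gluing => _ /forallP. Qed.

Lemma gluing_r0 x : r (std_r0 x) = std_r0 (r x).
Proof. by case/and4P: r_gluing => _ _ /forallP r_r0 _; apply/eqP. Qed.

Lemma gluing_r0_fpf x : r (std_r0 x) != x.
Proof. by case/and4P: r_gluing => _ _ _ /forallP. Qed.

Definition partner j := (r (flag_at j.*2))./2.
Definition opening j := j < partner j.

Lemma partner_lt j : partner j < m.*2.
Proof. by have := ltn_ord (r (flag_at j.*2)); rewrite /partner; lia. Qed.

Lemma partner_neq j : j < m.*2 -> partner j != j.
Proof.
move=> lt_j; apply/eqP => pj.
have [rj|rj] := flag_sides (r (flag_at j.*2)); rewrite -/(partner j) pj in rj.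
  by have := gluing_fpf (flag_at j.*2); rewrite rj eqxx.
by have := gluing_r0_fpf (flag_at j.*2); rewrite gluing_r0 rj std_r0K eqxx.
Qed.

Lemma partnerK j : j < m.*2 -> partner (partner j) = j.
Proof.
move=> lt_j; have [rj|rj] := flag_sides (r (flag_at j.*2)); rewrite -/(partner j) in rj.
  by rewrite /partner -rj gluingK flag_at_double //; lia.
have r_pj : r (flag_at (partner j).*2) = std_r0 (flag_at j.*2).
  by rewrite -[LHS]std_r0K -gluing_r0 -rj gluingK.
by rewrite /partner r_pj half_std_r0 flag_at_double //; lia.
Qed.

Lemma gluing_at_partner i : i < m.*2 -> r (flag_at i.*2) =
  if r (flag_at (partner i).*2) == flag_at i.*2 then flag_at (partner i).*2
  else std_r0 (flag_at (partner i).*2).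
Proof.
move=> lt_i; have [rp|rp] := flag_sides (r (flag_at (partner i).*2));
  rewrite -/(partner (partner i)) partnerK // in rp.
  by rewrite rp eqxx -rp gluingK.
by rewrite rp (negbTE (std_r0_fpf _)) -[LHS]std_r0K -gluing_r0 -rp gluingK.
Qed.

Lemma sum_opening : \sum_(0 <= j < m.*2) opening j <= m.
Proof.
pose p (j : 'I_m.*2) : 'I_m.*2 := Ordinal (partner_lt j).
have p_inj : injective p.
  move=> i j /(congr1 val) /= pij; apply: val_inj.
  by rewrite /= -(partnerK (ltn_ord i)) pij partnerK.
rewrite sum_nat_card; set O := [set j : 'I_m.*2 | opening j].
have O_le : #|O| <= #|~: O|.
  rewrite -(card_imset O p_inj); apply/subset_leq_card/subsetP => _ /imsetP [j + ->].
  by rewrite !inE /opening /= partnerK // -leqNgt => /ltnW.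
by have := cardsC O; rewrite card_ord; lia.
Qed.

Lemma closing_lt k : k < m.*2 -> ~~ opening k -> r (flag_at k.*2) < k.*2.
Proof. by move=> lt_k; have := partner_neq lt_k; rewrite /opening /partner; lia. Qed.

Lemma closing_gt0 k : k < m.*2 -> ~~ opening k -> 0 < k.
Proof. by move=> lt_k closing; have := closing_lt lt_k closing; lia. Qed.

Definition vgraph k := restr_graph std_r1 r k.*2.

Definition merging k :=
  ~~ opening k && ~~ connect (vgraph k) (std_r1 (flag_at k.*2)) (r (flag_at k.*2)).

Definition covers k (R : {set 'I_N}) :=
  forall x : 'I_N, x < k.*2 -> exists2 z, z \in R & connect (vgraph k) x z.

Lemma connect_vgraph_sym k x y : connect (vgraph k) x y = connect (vgraph k) y x.
Proof. by apply/sym_connect_sym/restr_graph_sym; [apply: std_r1K | apply: gluingK]. Qed.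

Lemma connect_vgraphS k x y : connect (vgraph k) x y -> connect (vgraph k.+1) x y.
Proof. by apply: connect_restr_graph_mono; rewrite leq_double. Qed.

Lemma vgraphS_r1 k : 0 < k -> k < m.*2 -> vgraph k.+1 (flag_at k.*2) (std_r1 (flag_at k.*2)).
Proof.
by move=> k_gt0 lt_k; apply: restr_graph_l; rewrite ?std_r1_double ?flag_at_double //; lia.
Qed.

Lemma vgraphS_r k (x : 'I_N) : k < m.*2 -> x < k.+1.*2 -> r x < k.*2 -> vgraph k.+1 x (r x).
Proof. by move=> lt_k lt_x lt_rx; apply: restr_graph_r; lia. Qed.

Lemma covers_base : covers 1 [set flag_at 0; std_r0 (flag_at 0)].
Proof.
move=> x lt_x; exists x; last exact: connect0.
by case: (flag_ltS (isT : 0 < m.*2) lt_x) => // ->; rewrite !inE eqxx ?orbT.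
Qed.

Lemma covers_opening k R : 0 < k -> k < m.*2 -> covers k R ->
  covers k.+1 (std_r0 (flag_at k.*2) |: R).
Proof.
move=> k_gt0 lt_k cov x lt_x; case: (flag_ltS lt_k lt_x) => [lt_x'|->|->].
- have [z zR xz] := cov x lt_x'.
  by exists z; [rewrite inE zR orbT | apply: connect_vgraphS].
- have [z zR xz] := cov _ (std_r1_double_lt k_gt0 lt_k).
  exists z; first by rewrite inE zR orbT.
  exact: connect_trans (connect1 (vgraphS_r1 k_gt0 lt_k)) (connect_vgraphS xz).
- by exists (std_r0 (flag_at k.*2)); [rewrite setU11 | apply: connect0].
Qed.

Lemma covers_closing k R : k < m.*2 -> ~~ opening k -> covers k R -> covers k.+1 R.
Proof.
move=> lt_k closing cov x lt_x.
have k_gt0 := closing_gt0 lt_k closing; have lt_r := closing_lt lt_k closing.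
case: (flag_ltS lt_k lt_x) => [lt_x'|->|->].
- by have [z zR xz] := cov x lt_x'; exists z => //; apply: connect_vgraphS.
- have [z zR xz] := cov _ (std_r1_double_lt k_gt0 lt_k).
  exists z => //.
  exact: connect_trans (connect1 (vgraphS_r1 k_gt0 lt_k)) (connect_vgraphS xz).
- have lt_r' : r (std_r0 (flag_at k.*2)) < k.*2.
    by rewrite gluing_r0 std_r0_lt_double.
  have [z zR xz] := cov _ lt_r'; exists z => //.
  apply: connect_trans (connect1 (vgraphS_r lt_k _ lt_r')) (connect_vgraphS xz).
  by rewrite std_r0_double // flag_atE; lia.
Qed.

Lemma covers_merging k R : k < m.*2 -> merging k -> covers k R ->
  exists2 z, z \in R & covers k.+1 (R :\ z).
Proof.
move=> lt_k /andP [closing not_conn] cov.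
have k_gt0 := closing_gt0 lt_k closing; have lt_r := closing_lt lt_k closing.
have [zr zrR rz] := cov _ lt_r.
have [za zaR az] := cov _ (std_r1_double_lt k_gt0 lt_k).
have zr_za : zr != za.
  apply: contraNneq not_conn => eq_z.
  by apply: connect_trans az _; rewrite -eq_z connect_vgraph_sym.
have joined : connect (vgraph k.+1) zr za.
  rewrite connect_vgraph_sym in rz.
  apply: connect_trans (connect_vgraphS rz) _.
  apply: (connect_trans (y := flag_at k.*2)).
    by rewrite connect_vgraph_sym connect1 // vgraphS_r // flag_at_double; lia.
  exact: connect_trans (connect1 (vgraphS_r1 k_gt0 lt_k)) (connect_vgraphS az).
exists zr => // x lt_x; have [z zR xz] := covers_closing lt_k closing cov lt_x.
case: (eqVneq z zr) => [eq_z|ne_z]; last by exists z; rewrite // !inE ne_z.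
exists za; first by rewrite !inE eq_sym zr_za.
by apply: connect_trans xz _; rewrite eq_z.
Qed.

Lemma covers_count k : k < m.*2 -> exists2 R, covers k.+1 R &
  #|R| + \sum_(0 <= j < k.+1) merging j <= \sum_(0 <= j < k.+1) opening j + 1.
Proof.
elim: k => [_|k IHk lt_k].
  have opening0 : opening 0 by rewrite /opening lt0n partner_neq.
  exists [set flag_at 0; std_r0 (flag_at 0)]; first exact: covers_base.
  by rewrite !big_nat1 /merging opening0 cards2 /=; case: (_ != _).
have [R cov le_R] := IHk (ltnW lt_k); rewrite !(big_nat_recr k.+1) //=.
case: (boolP (opening k.+1)) => [opens|closes].
  have -> : merging k.+1 = false by rewrite /merging opens.
  exists (std_r0 (flag_at k.+1.*2) |: R); first exact: covers_opening.
  by rewrite cardsU1; case: (_ \notin _) le_R => /=; lia.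
case: (boolP (merging k.+1)) => [merges|stays].
  have [z zR cov'] := covers_merging lt_k merges cov; exists (R :\ z) => //.
  by move: le_R; rewrite (cardsD1 z R) zR /=; lia.
by exists R; [apply: covers_closing | rewrite !addn0].
Qed.

Lemma vertices_add_merging :
  nvert (std_triple r) + \sum_(0 <= j < m.*2) merging j <= m.+1.
Proof.
have lt_k : m.*2.-1 < m.*2 by rewrite prednK ?double_gt0.
have [R cov le_R] := covers_count lt_k; rewrite prednK ?double_gt0 // in cov le_R.
suff : nvert (std_triple r) <= #|R| by have := sum_opening; lia.
apply: leq_trans (leq_imset_card (orbit 'P <<[set std_r1; r]>>%g) R).
apply/subset_leq_card/subsetP => _ /imsetP [x _ ->].
have lt_x : x < m.*2.*2 by have := ltn_ord x; lia.
have [z zR xz] := cov x lt_x.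
have full : m.*2.*2 = N by lia.
rewrite /vgraph full in xz.
by apply/imsetP; exists z => //; apply/orbit_eqP; rewrite orbit_sym connect_restr_graph_orbit.
Qed.

Definition first_fixed k := [pick y |
  connect (vgraph k) (std_r1 (flag_at k.*2)) y && (restr r k.*2 y == y)].

Definition predictable k := ~~ opening k && (first_fixed k == Some (r (flag_at k.*2))).
Definition unpredictable k := ~~ opening k && ~~ predictable k.

Lemma unpredictable_merging k : k < m.*2 -> unpredictable k -> merging k.
Proof.
move=> lt_k /andP [closing]; rewrite /merging closing; apply: contra => conn.
have r1_fixed : restr std_r1 k.*2 (std_r1 (flag_at k.*2)) = std_r1 (flag_at k.*2).
  by rewrite restr_out // std_r1K flag_at_double // ltnn.
have r_fixed : restr r k.*2 (r (flag_at k.*2)) = r (flag_at k.*2).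
  by rewrite restr_out // gluingK flag_at_double // ltnn.
(* Flag 2k-1 is not moved by the restricted r1, so its component holds at most
   one flag not moved by the restricted r. *)
rewrite /predictable closing /first_fixed; case: pickP => [y /andP [y_conn /eqP y_fixed]|].
  by rewrite (invol_graph_fixed_uniq (restr_involutive _ (@std_r1K m'))
    (restr_involutive _ gluingK) r1_fixed y_conn y_fixed conn r_fixed) /=.
by move=> /(_ (r (flag_at k.*2))); rewrite conn r_fixed eqxx.
Qed.

Lemma vertices_add_unpredictable :
  nvert (std_triple r) + \sum_(0 <= j < m.*2) unpredictable j <= m.+1.
Proof.
apply: leq_trans vertices_add_merging; rewrite leq_add2l !big_nat leq_sum // => j /andP [_ lt_j].
by case: (boolP (unpredictable j)) => // /(unpredictable_merging lt_j) ->.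
Qed.
End Gluing.

Section Encoding.
Variable m' : nat.
Local Notation m := m'.+1.
Local Notation N := (4 * m).
Local Notation flag_at := (@flag_at m').
Local Notation std_triple := (@std_triple m').
Implicit Types r rA rB : flags m.

Definition agree_below rA rB k :=
  forall j, j < k -> ~~ opening rA j -> rA (flag_at j.*2) = rB (flag_at j.*2).

Lemma agree_opening rA rB k i : side_gluing rA -> side_gluing rB -> agree_below rA rB k ->
  i < m.*2 -> opening rA i -> partner rA i < k ->
  partner rB i = partner rA i /\ rA (flag_at i.*2) = rB (flag_at i.*2).
Proof.
move=> glA glB agree lt_i opens lt_p; set j := partner rA i in lt_p *.
have pjA : partner rA j = i by apply: partnerK.
have closes : ~~ opening rA j by rewrite /opening pjA -leqNgt ltnW.
have rj := agree j lt_p closes.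
have pjB : partner rB j = i by rewrite /partner -rj.
have piB : partner rB i = j by rewrite -pjB partnerK // partner_lt.
by rewrite (gluing_at_partner glA lt_i) (gluing_at_partner glB lt_i) piB -/j rj.
Qed.

Lemma agree_or_beyond rA rB k i : side_gluing rA -> side_gluing rB ->
  (forall j, j < m.*2 -> opening rA j = opening rB j) -> k <= m.*2 ->
  agree_below rA rB k -> i < k ->
  rA (flag_at i.*2) = rB (flag_at i.*2) \/ k.*2 <= rA (flag_at i.*2) /\ k.*2 <= rB (flag_at i.*2).
Proof.
move=> glA glB same_op le_k agree lt_i; have lt_i' : i < m.*2 by lia.
case: (boolP (opening rA i)) => [opensA|]; last by left; apply: agree.
have opensB : opening rB i by rewrite -same_op.
have agree' : agree_below rB rA k.
  by move=> j lt_j; rewrite -same_op; [move/(agree j lt_j) | lia].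
case: (ltnP (partner rA i) k) => [ltA|geA].
  by left; case: (agree_opening glA glB agree lt_i' opensA ltA).
case: (ltnP (partner rB i) k) => [ltB|geB].
  by have [] := agree_opening glB glA agree' lt_i' opensB ltB; lia.
by right; move: geA geB; rewrite /partner; lia.
Qed.

Lemma restr_agree rA rB k : side_gluing rA -> side_gluing rB ->
  (forall j, j < m.*2 -> opening rA j = opening rB j) -> k <= m.*2 ->
  agree_below rA rB k -> restr rA k.*2 =1 restr rB k.*2.
Proof.
move=> glA glB same_op le_k agree x; rewrite /restr.
case: (ltnP x k.*2) => //= lt_x; have lt_i : x./2 < k by lia.
have [->|->] := flag_sides x; rewrite ?gluing_r0 // ?std_r0_lt_double;
  by case: (agree_or_beyond glA glB same_op le_k agree lt_i) => [->|[geA geB]];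
    rewrite // !ltnNge geA geB.
Qed.

Definition side_kind r : {ffun 'I_m.*2 -> option bool} :=
  [ffun j : 'I_m.*2 => if opening r j then None else Some (predictable r j)].

Definition recorded r : {ffun 'I_m.*2 -> option 'I_N} :=
  [ffun j : 'I_m.*2 => if unpredictable r j then Some (r (flag_at j.*2)) else None].

Lemma side_kind_opening rA rB j (lt_j : j < m.*2) : side_kind rA = side_kind rB ->
  opening rA j = opening rB j.
Proof.
move/ffunP/(_ (Ordinal lt_j)); rewrite !ffunE /=.
by case: (opening rA j); case: (opening rB j).
Qed.

Lemma side_kind_predictable rA rB j (lt_j : j < m.*2) : side_kind rA = side_kind rB ->
  predictable rA j = predictable rB j.
Proof.
move=> same_kind; have /ffunP/(_ (Ordinal lt_j)) := same_kind.
rewrite !ffunE /= /predictable -(side_kind_opening lt_j same_kind).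
by case: (opening rA j) => // -[->].
Qed.

Lemma agree_belowS rA rB k : side_gluing rA -> side_gluing rB -> k < m.*2 ->
  side_kind rA = side_kind rB -> recorded rA = recorded rB ->
  agree_below rA rB k -> agree_below rA rB k.+1.
Proof.
move=> glA glB lt_k same_kind same_rec agree j; rewrite ltnS leq_eqVlt.
case/orP=> [/eqP ->{j} closes|]; last exact: agree.
have same_op j' : j' < m.*2 -> opening rA j' = opening rB j'.
  by move=> lt_j'; apply: side_kind_opening.
have same_restr := restr_agree glA glB same_op (ltnW lt_k) agree.
have same_fixed : first_fixed rA k = first_fixed rB k.
  apply: eq_pick => y /=; rewrite /vgraph same_restr.
  by congr (_ && _); apply: eq_connect => u v; rewrite /restr_graph /invol_graph same_restr.
case: (boolP (predictable rA k)) => [predA|unpredA].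
  have predB : predictable rB k by rewrite -(side_kind_predictable lt_k same_kind).
  move: predA predB => /andP [_ /eqP fixA] /andP [_ /eqP].
  by rewrite -same_fixed fixA => -[].
have /ffunP/(_ (Ordinal lt_k)) := same_rec; rewrite !ffunE /unpredictable /=.
rewrite -(side_kind_opening lt_k same_kind) -(side_kind_predictable lt_k same_kind).
by rewrite closes unpredA => -[].
Qed.

Lemma side_kind_recorded_inj rA rB : side_gluing rA -> side_gluing rB ->
  side_kind rA = side_kind rB -> recorded rA = recorded rB -> rA = rB.
Proof.
move=> glA glB same_kind same_rec.
have agree k : k <= m.*2 -> agree_below rA rB k.
  elim: k => [_ j //|k IHk lt_k]; exact: agree_belowS (IHk (ltnW lt_k)).
have same_op j : j < m.*2 -> opening rA j = opening rB j.
  by move=> lt_j; apply: side_kind_opening.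
have full : m.*2.*2 = N by lia.
apply/permP => x; have := restr_agree glA glB same_op (leqnn _) (agree _ (leqnn _)) x.
by rewrite full !restr_full.
Qed.

Definition unpredictable_sides (s : {ffun 'I_m.*2 -> option bool}) := [set j | s j == Some false].

Definition codes h := [set c : {ffun 'I_m.*2 -> option bool} * {ffun 'I_m.*2 -> option 'I_N} |
  (#|unpredictable_sides c.1| <= h) && (c.2 \in pffun_on None (unpredictable_sides c.1) predT)].

Lemma card_codes h : #|codes h| <= 3 ^ m.*2 * N.+1 ^ h.
Proof.
rewrite -sum1_card big_mkcond.
rewrite (eq_bigr (fun p => (fun s v => if (s, v) \in codes h then 1 else 0) p.1 p.2));
  last by case.
rewrite -(pair_bigA _ (fun s v => if (s, v) \in codes h then 1 else 0)).
have -> : 3 ^ m.*2 = #|{ffun 'I_m.*2 -> option bool}|.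
  by rewrite card_ffun card_option card_bool card_ord.
rewrite -sum_nat_const; apply: leq_sum => s _.
case: (leqP #|unpredictable_sides s| h) => [le_h|gt_h]; last first.
  by rewrite big1 // => v _; rewrite inE /= leqNgt gt_h.
apply: leq_trans
  (_ : \sum_v (if v \in pffun_on None (unpredictable_sides s) predT then 1 else 0) <= _).
  by apply: leq_sum => v _; rewrite inE /= le_h.
rewrite -big_mkcond sum1_card card_pffun_on card_option card_ord.
exact: leq_pexp2l.
Qed.

Lemma side_kind_unpredictable r :
  unpredictable_sides (side_kind r) = [set j : 'I_m.*2 | unpredictable r j].
Proof.
apply/setP => j; rewrite !inE ffunE /unpredictable.
by case: (opening r j); case: (predictable r j).
Qed.

Lemma card_gluings n h : n + h = m.+1 ->
  #|[set r | side_gluing r && (nvert (std_triple r) == n)]| <= 3 ^ m.*2 * N.+1 ^ h.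
Proof.
move=> nh; set G := [set r | _].
have code_inj : {in G &, injective (fun r => (side_kind r, recorded r))}.
  move=> rA rB; rewrite !inE => /andP [glA _] /andP [glB _] [].
  exact: side_kind_recorded_inj.
rewrite -(card_in_imset code_inj); apply/(leq_trans _ (card_codes h))/subset_leq_card.
apply/subsetP => _ /imsetP [r + ->]; rewrite inE => /andP [gl /eqP nv].
rewrite inE /= side_kind_unpredictable; apply/andP; split.
  by rewrite -sum_nat_card; have := vertices_add_unpredictable gl; rewrite nv; lia.
apply/pffun_onP; split => [|j _]; last by [].
by apply/subsetP => j; rewrite !inE ffunE; case: (unpredictable r j).
Qed.
End Encoding.

Lemma fpf_involK m (r : flags m) : fpf_invol r -> involutive r.
Proof. by case/andP => /eqP rr _ x; rewrite -permM rr perm1. Qed.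

Lemma fpf_invol_neq m (r : flags m) : fpf_invol r -> forall x, r x != x.
Proof. by case/andP => _ /forallP. Qed.

Lemma n_orbits1_orbit m (G : {group flags m}) x y : n_orbits G = 1 -> y \in orbit 'P G x.
Proof.
move=> one_orbit; suff -> : orbit 'P G x = orbit 'P G y by apply: orbit_refl.
apply/eqP; apply: contraT => neq_xy.
have : #|[set orbit 'P G x; orbit 'P G y]| <= n_orbits G.
  by apply/subset_leq_card/subsetP => O; rewrite !inE => /orP [] /eqP ->; apply: imset_f.
by rewrite one_orbit cards2 neq_xy.
Qed.

Section FaceWalk.
Variable m' : nat.
Local Notation m := m'.+1.
Local Notation N := (4 * m).
Local Notation flag_at := (@flag_at m').
Variable t : triple m.
Hypotheses (t_map : is_map t) (t_unicellular : nface t = 1).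

Let r0K : involutive (r0 t).
Proof. by case/and5P: t_map => /fpf_involK. Qed.
Let r1K : involutive (r1 t).
Proof. by case/and5P: t_map => _ /fpf_involK. Qed.
Let r0_neq : forall x, r0 t x != x.
Proof. by case/and5P: t_map => /fpf_invol_neq. Qed.
Let r1_neq : forall x, r1 t x != x.
Proof. by case/and5P: t_map => _ /fpf_invol_neq. Qed.

Local Notation rho := (fun x => r1 t (r0 t x)).

Let rho_inj : injective rho.
Proof. by move=> x y /(inv_inj r1K) /(inv_inj r0K). Qed.

Definition face_walk k :=
  if odd k then r0 t (iter k./2 rho (flag_at 0)) else iter k./2 rho (flag_at 0).

Local Notation o := (fingraph.order rho (flag_at 0)).

Lemma face_walk_r0 k : r0 t (face_walk k) = face_walk (r0_nat k).
Proof.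
rewrite /face_walk /r0_nat; case: (boolP (odd k)) => k_odd.
  by rewrite r0K ifF; [congr iter; lia | lia].
by rewrite ifT; [congr (r0 t (iter _ _ _)); lia | lia].
Qed.

Lemma face_walk_r1_odd k : odd k -> r1 t (face_walk k) = face_walk k.+1.
Proof.
move=> k_odd; rewrite /face_walk k_odd ifF; last by lia.
by have -> : k.+1./2 = k./2.+1 by lia.
Qed.

Lemma face_walk_r1_even k : ~~ odd k -> 0 < k -> r1 t (face_walk k) = face_walk k.-1.
Proof.
move=> k_even k_gt0; have k1_odd : odd k.-1 by lia.
by rewrite -{1}(prednK k_gt0) -(face_walk_r1_odd k1_odd) r1K.
Qed.

Lemma face_walk_period k : face_walk (k + o.*2) = face_walk k.
Proof.
rewrite /face_walk; have -> : odd (k + o.*2) = odd k by lia.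
have -> : (k + o.*2)./2 = k./2 + o by lia.
by rewrite iterD iter_order.
Qed.

Lemma face_walk_inj i j : i < o.*2 -> j < o.*2 -> face_walk i = face_walk j -> i = j.
Proof.
move=> lt_i lt_j; rewrite /face_walk.
have iter_inj_lt u v :
    u < o -> v < o -> iter u rho (flag_at 0) = iter v rho (flag_at 0) -> u = v.
  by move=> lt_u lt_v eq_uv; rewrite -(findex_iter lt_u) eq_uv findex_iter.
have neq u v := iter_rho_neq r1K r0K r1_neq r0_neq u v (flag_at 0).
case: (boolP (odd i)) => i_odd; case: (boolP (odd j)) => j_odd.
- by move/(inv_inj r0K)/iter_inj_lt; lia.
- by move=> eq_ij; have := neq j./2 i./2; rewrite eq_ij eqxx.
- by move=> eq_ij; have := neq i./2 j./2; rewrite eq_ij eqxx.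
- by move/iter_inj_lt; lia.
Qed.

Let o2_gt0 : 0 < o.*2.
Proof. by rewrite double_gt0 fingraph.order_gt0. Qed.

Let walk_set := [set face_walk k | k : 'I_o.*2].

Let face_walk_in k : k < o.*2 -> face_walk k \in walk_set.
Proof. by move=> lt_k; apply/imsetP; exists (Ordinal lt_k). Qed.

Lemma face_walk_r1_0 : r1 t (face_walk 0) = face_walk o.*2.-1.
Proof.
have last_odd : odd o.*2.-1 by lia.
by rewrite -(face_walk_period 0) -(prednK o2_gt0) -face_walk_r1_odd ?r1K.
Qed.

Let walk_set_r0 x : x \in walk_set -> r0 t x \in walk_set.
Proof.
case/imsetP => k _ ->; rewrite face_walk_r0; apply: face_walk_in.
by have := ltn_ord k; rewrite /r0_nat; case: ifP; lia.
Qed.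

Let walk_set_r1 x : x \in walk_set -> r1 t x \in walk_set.
Proof.
case/imsetP => k _ ->; have lt_k := ltn_ord k.
case: (boolP (odd k)) => [k_odd|k_even].
  rewrite face_walk_r1_odd //; case: (ltnP k.+1 o.*2) => [|ge_k]; first exact: face_walk_in.
  have -> : k.+1 = 0 + o.*2 by lia.
  by rewrite face_walk_period; apply: face_walk_in; lia.
case: (posnP k) => [->|k_gt0]; first by rewrite face_walk_r1_0; apply: face_walk_in; lia.
by rewrite face_walk_r1_even //; apply: face_walk_in; lia.
Qed.

Lemma walk_setT y : y \in walk_set.
Proof.
have acts : [acts <<[set r0 t; r1 t]>>%g, on walk_set | 'P].
  rewrite gen_subG; apply/subsetP => g /set2P [] ->; apply/astabsP => x /=; apply/idP/idP.
  - by move/walk_set_r0; rewrite r0K.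
  - exact: walk_set_r0.
  - by move/walk_set_r1; rewrite r1K.
  - exact: walk_set_r1.
have walk0 : flag_at 0 \in walk_set := face_walk_in o2_gt0.
by have /subsetP := acts_sub_orbit (flag_at 0) acts; rewrite walk0; apply; apply: n_orbits1_orbit.
Qed.

Lemma face_period : o.*2 = N.
Proof.
have walk_inj : injective (fun k : 'I_o.*2 => face_walk k).
  by move=> i j /face_walk_inj eq_ij; apply/val_inj/eq_ij.
rewrite -[o.*2]card_ord -(card_imset _ walk_inj) -[RHS]card_ord.
by apply/eqP; rewrite eqn_leq max_card; apply/subset_leq_card/subsetP => y _; apply: walk_setT.
Qed.

Definition face_walk_fun (k : 'I_N) : 'I_N := face_walk k.

Lemma face_walk_fun_inj : injective face_walk_fun.
Proof. by move=> i j /face_walk_inj eq_ij; apply/val_inj/eq_ij; rewrite face_period. Qed.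

Lemma face_walk_r1 k : k < N -> r1 t (face_walk k) = face_walk (r1_nat m' k).
Proof.
move=> lt_k; rewrite /r1_nat; case: (boolP (odd k)) => k_odd.
  rewrite face_walk_r1_odd //; case: eqP => // k_last.
  by rewrite (_ : k.+1 = 0 + o.*2) ?face_walk_period // face_period.
case: eqP => [->|k_gt0]; first by rewrite face_walk_r1_0 face_period.
by rewrite face_walk_r1_even //; lia.
Qed.

Lemma unicellular_relabel_std :
  exists p : flags m, relabel p t = std_triple (r2 (relabel p t)).
Proof.
exists (perm face_walk_fun_inj)^-1%g; rewrite /relabel /std_triple invgK; congr (_, _, _);
  apply/permP => x; rewrite !permM; apply: (canLR (permK _)); rewrite !permE /face_walk_fun.
  by rewrite face_walk_r0 /r0_fun flag_atE // r0_nat_lt.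
by rewrite face_walk_r1 // /r1_fun flag_atE // r1_nat_lt.
Qed.
End FaceWalk.

Section Relabelling.
Variable m : nat.
Implicit Types (p r : flags m) (t : triple m).
Local Open Scope group_scope.

Lemma relabelE p t : relabel p t = (r0 t ^ p, r1 t ^ p, r2 t ^ p).
Proof. by rewrite /relabel !conjgE !mulgA. Qed.

Lemma conj_permE r p x : (r ^ p) x = p (r (p^-1 x)).
Proof. by rewrite conjgE !permM. Qed.

Lemma iso_class_relabel p t : iso_class (relabel p t) = iso_class t.
Proof.
have relabelM q u : relabel q (relabel p u) = relabel (p * q) u.
  by rewrite !relabelE /r0 /r1 /r2 /= !conjgM.
apply/setP => u; apply/imsetP/imsetP => [[q _ ->]|[q _ ->]].
  by exists (p * q); rewrite ?relabelM.
by exists (p^-1 * q); rewrite ?relabelM ?mulKVg.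
Qed.

Lemma n_orbits_conj (A : {set flags m}) p : n_orbits (A :^ p) = n_orbits A.
Proof.
rewrite /n_orbits -[RHS](card_imset _ (act_inj 'P^* p)); apply: eq_card => O.
apply/imsetP/imsetP => [[x _ ->]|[_ /imsetP [x _ ->] ->]].
  by exists (orbit 'P A (p^-1 x)); rewrite ?imset_f //= setact_orbit /= apermE permKV.
by exists (p x); rewrite //= setact_orbit /= apermE.
Qed.

Lemma nvert_relabel p t : nvert (relabel p t) = nvert t.
Proof.
by rewrite relabelE /nvert /r1 /r2 /= -[RHS](n_orbits_conj _ p) -genJ /conjugate imsetU1 imset_set1.
Qed.

Lemma fpf_conj r p : [forall x, (r ^ p) x != x] = [forall x, r x != x].
Proof.
apply/forallP/forallP => fpf x; last by rewrite conj_permE (can2_eq (permK p) (permKV p)).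
by have := fpf (p x); rewrite conj_permE permK (can2_eq (permK p) (permKV p)) permK.
Qed.

Lemma fpf_invol_conj r p : fpf_invol (r ^ p) = fpf_invol r.
Proof. by rewrite /fpf_invol -conjMg conjg_eq1 fpf_conj. Qed.

Lemma transitive_conj (A : {set flags m}) p :
  [forall x, forall y, y \in orbit 'P (A :^ p) x] = [forall x, forall y, y \in orbit 'P A x].
Proof.
apply/forallP/forallP => trans x; apply/forallP => y.
  by have /forallP/(_ (p y)) := trans (p x); rewrite -!apermE orbit_conjsg.
by rewrite -(permKV p x) -(permKV p y) -!apermE orbit_conjsg; move/forallP: (trans (aperm x p^-1)).
Qed.

Lemma is_map_relabel p t : is_map (relabel p t) = is_map t.
Proof.
rewrite relabelE /is_map /r0 /r1 /r2 /= !fpf_invol_conj -!conjMg (inj_eq (@conjg_inj _ p)) fpf_conj.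
have -> : [set r0 t ^ p; r1 t ^ p; r2 t ^ p] = [set r0 t; r1 t; r2 t] :^ p.
  by rewrite /conjugate !(imsetU, imsetU1, imset_set1).
by rewrite genJ transitive_conj.
Qed.

End Relabelling.

Section Counting.
Variables (m' n h : nat).
Local Notation m := m'.+1.
Local Notation N := (4 * m).
Local Notation std_triple := (@std_triple m').

Lemma umap_edges (t : triple m) : is_umap n h t -> n + h = m.+1.
Proof. by case/and5P => _ /eqP nv /eqP nf /eqP euler _; lia. Qed.

Lemma umap_iso_std (t : triple m) : is_umap n h t -> exists2 r,
  side_gluing r && (nvert (std_triple r) == n) & iso_class t = iso_class (std_triple r).
Proof.
case/and5P => t_map /eqP nv /eqP nf _ _.
have [p std] := unicellular_relabel_std t_map nf.
exists (r2 (relabel p t)); last by rewrite -std iso_class_relabel.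
rewrite -std nvert_relabel nv eqxx andbT; apply: std_triple_gluing.
by rewrite -std is_map_relabel.
Qed.

Lemma umap_count_edges_le : n + h = m.+1 -> umap_count_edges m n h <= 3 ^ m.*2 * N.+1 ^ h.
Proof.
move=> nh; apply: leq_trans (card_gluings nh); rewrite /umap_count_edges.
apply: leq_trans (leq_imset_card (fun r => iso_class (std_triple r)) _).
apply/subset_leq_card/subsetP => _ /imsetP [t + ->]; rewrite inE => /umap_iso_std [r gl ->].
by apply: imset_f; rewrite inE.
Qed.

Lemma umap_count_edges_eq0 : n + h != m.+1 -> umap_count_edges m n h = 0.
Proof.
move=> nh; apply/eqP; rewrite cards_eq0 -subset0; apply/subsetP => c /imsetP [t + _].
by rewrite inE => /umap_edges eq_nh; rewrite eq_nh eqxx in nh.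
Qed.
End Counting.

Lemma UMap_card_le n h : 0 < n ->
  UMap_card n h <= 1 + 3 ^ (n + h).-1.*2 * (4 * (n + h).-1).+1 ^ h.
Proof.
move=> n_gt0; rewrite /UMap_card leq_add ?leq_b1 //.
apply: leq_trans (sum_nat_pick 1 (n + h).+1 (n + h).-1 _).
rewrite !big_nat; apply: leq_sum => -[//|m] _.
case: (eqVneq (n + h) m.+2) => [nh|nh]; last by rewrite umap_count_edges_eq0.
by rewrite nh eqxx; apply: umap_count_edges_le.
Qed.

Lemma UMap_card_le_pow n h : 0 < n -> UMap_card n h <= 36 ^ (n + h) * (n + h) ^ h.
Proof.
move=> n_gt0; apply: leq_trans (UMap_card_le h n_gt0) _.
have [M nh] : exists M, n + h = M.+1 by exists (n + h).-1; rewrite prednK // addn_gt0 n_gt0.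
have le_hM : h <= M.+1 by lia.
rewrite nh /= -mul2n expnM (_ : 3 ^ 2 = 9) // (_ : 36 = 9 * 4) // expnMn expnS -mulnA.
have base_le : (4 * M).+1 ^ h <= 4 ^ M.+1 * M.+1 ^ h.
  apply: (@leq_trans ((4 * M.+1) ^ h)); first by apply: leq_expn2r; lia.
  by rewrite expnMn leq_mul2r leq_pexp2l ?orbT.
have : 0 < 9 ^ M * (4 ^ M.+1 * M.+1 ^ h) by rewrite !muln_gt0 !expn_gt0.
by have := leq_mul (leqnn (9 ^ M)) base_le; lia.
Qed.

Section RealBound.
Local Open Scope R_scope.

Lemma INR_expn a b : INR (a ^ b)%N = INR a ^ b.
Proof. by elim: b => [|b IHb] //; rewrite expnS mult_INR IHb. Qed.

Lemma exp_pow_INR x k : exp x ^ k = exp (INR k * x).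
Proof. by rewrite -Rpower_pow; [rewrite /Rpower ln_exp | exact: exp_pos]. Qed.

Lemma pow_le_exp_pow k h : INR k ^ h <= exp (INR k) * INR h ^ h.
Proof.
have k_ge0 := pos_INR k.
case: h => [|h]; first by rewrite /= !Rmult_1_r; have := exp_ineq1_le (INR k); lra.
set x := INR h.+1; have x_gt0 : 0 < x by apply: lt_0_INR; lia.
have ratio_ge0 : 0 <= INR k / x by apply: Rmult_le_pos; [| apply/Rlt_le/Rinv_0_lt_compat].
have -> : exp (INR k) = exp (INR k / x) ^ h.+1 by rewrite exp_pow_INR -/x; congr exp; field; lra.
have -> : INR k ^ h.+1 = (INR k / x) ^ h.+1 * x ^ h.+1.
  by rewrite -Rpow_mult_distr; congr pow; field; lra.
apply: Rmult_le_compat_r; first by apply: pow_le; lra.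
by apply: pow_incr; have := exp_ineq1_le (INR k / x); lra.
Qed.

Lemma INR_expn36_le K h : INR (36 ^ K * K ^ h)%N <= (2 ^ 7 * exp (3 / 2)) ^ K * INR h ^ h.
Proof.
have hh_ge0 : 0 <= INR h ^ h by apply/pow_le/pos_INR.
rewrite mult_INR !INR_expn (_ : INR 36 = 36); last by rewrite /=; ring.
apply: (Rle_trans _ (36 ^ K * (exp (INR K) * INR h ^ h))).
  by apply: Rmult_le_compat_l; [apply: pow_le; lra | apply: pow_le_exp_pow].
rewrite -Rmult_assoc -[INR K]Rmult_1_r -exp_pow_INR -Rpow_mult_distr.
apply: Rmult_le_compat_r => //; apply: pow_incr; split; first by have := exp_pos 1; lra.
by have := exp_increasing 1 (3 / 2); have := exp_pos 1; rewrite /=; lra.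
Qed.
End RealBound.

Theorem lemma10 (n h : nat) :
  (1 <= n)%N -> ~~ odd h ->
  Rle (INR (UMap_card n h))
      (Rmult (pow (Rmult (pow 2 7) (exp (Rdiv 3 2))) (n + h)%N) (pow (INR h) h)).
Proof.
move=> n_gt0 _.
apply: Rle_trans (INR_expn36_le (n + h) h).
exact/le_INR/leP/UMap_card_le_pow.
Qed.
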